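(* (Principal specialization.) Let $0\le m\le n$, $x=(x_1,\dots,x_m)$, and let $y=(1,t,\dots,t^{n-1})$. Then \[F(t^{n-m+1};x,y;t)=\prod_{i=1}^m\frac{1-t^{i+n-m}}{1-t^nx_i}\quad\text{and}\quad F(1;x,y;t)=t^{\binom m2}x_1\cdots x_m\prod_{i=1}^m\frac{1-t^{i+n-m}}{1-t^nx_i}.\]
   Context: For $x=(x_1,\dots,x_m)$, $y=(y_1,\dots,y_n)$, \[F(u;x,y;t)=\sum_{I\subseteq\{1,\dots,m\}}(-u)^{|I|}t^{\binom{|I|}{2}}\prod_{i\in I,\ j\in\{1,\dots,m\}\setminus I}\frac{tx_i-x_j}{x_i-x_j}\prod_{i\in I}\prod_{j=1}^n\frac{1-x_iy_j}{1-tx_iy_j}.\] *)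

From HB Require Import structures.
From mathcomp Require Import all_boot all_order all_algebra.
Set Implicit Arguments. Unset Strict Implicit. Unset Printing Implicit Defensive.
Import Order.TTheory GRing.Theory Num.Theory.
Local Open Scope ring_scope.

(* F(u; x, y; t) for x = (x_1..x_m), y = (y_1..y_n), values in a field R.
   Indices are 0-based ('I_m, 'I_n); the subset I ranges over {set 'I_m}. *)
Definition Ffun (R : fieldType) (m n : nat) (u : R) (x : 'I_m -> R)
    (y : 'I_n -> R) (t : R) : R :=
  \sum_(I : {set 'I_m})
    (- u) ^+ #|I| * t ^+ 'C(#|I|, 2)
    * (\prod_(i in I) \prod_(j in ~: I) ((t * x i - x j) / (x i - x j)))
    * (\prod_(i in I) \prod_(j < n) ((1 - x i * y j) / (1 - t * x i * y j))).

From HB Require Import structures.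
From mathcomp Require Import all_boot all_order all_algebra.
From mathcomp Require Import ring zify.
Set Implicit Arguments. Unset Strict Implicit. Unset Printing Implicit Defensive.
Import Order.TTheory GRing.Theory Num.Theory.
Local Open Scope ring_scope.

(* Telescoping the product over y turns F(u)·prod_i (1 - t^n x_i) into a sum
   Phi(S, c, b) over the subsets I of S = {1..m}, with c = -u and b = t^n.  When a point a is added to S,
   Phi(a ∪ S, c, b)·prod_{j in S} (x_a - x_j) is a polynomial in x_a of degree
   at most |S| + 1: it vanishes at every x_j (the summands for I and I ∪ {a}
   cancel), its value at 0 is (1 + c)·Phi(S, ct, b)·prod_j (-x_j), and its
   X^(|S|+1)-coefficient is -(b + c t^|S|)·Phi(S, c, b).  In the two
   specializations c = -s, b = s t^(|S|-1) and c = -1, the induction hypothesis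
   shows that an explicit polynomial has the same data, so the two agree by
   counting roots.  Injectivity of x lets us add the points in an order where 0
   is distinct from the x_j already present. *)

Section DegLeCoef.
Variable R : comNzRingType.

Definition deg_le_coef (p : {poly R}) n l := (size p <= n.+1)%N /\ p`_n = l.

Lemma deg_le_coef0 n : deg_le_coef 0 n 0.
Proof. by split; rewrite ?size_poly0 ?coef0. Qed.

Lemma deg_le_coefD p q n l l' :
  deg_le_coef p n l -> deg_le_coef q n l' -> deg_le_coef (p + q) n (l + l').
Proof.
move=> [sp cp] [sq cq]; split; last by rewrite coefD cp cq.
by apply: leq_trans (size_polyD _ _) _; rewrite geq_max sp sq.
Qed.

Lemma deg_le_coefN p n l : deg_le_coef p n l -> deg_le_coef (- p) n (- l).
Proof. by move=> [sp cp]; split; rewrite ?size_polyN // coefN cp. Qed.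

Lemma deg_le_coefB p q n l l' :
  deg_le_coef p n l -> deg_le_coef q n l' -> deg_le_coef (p - q) n (l - l').
Proof. by move=> dp /deg_le_coefN; apply: deg_le_coefD. Qed.

Lemma deg_le_coefZ a p n l : deg_le_coef p n l -> deg_le_coef (a *: p) n (a * l).
Proof.
move=> [sp cp]; split; last by rewrite coefZ cp.
exact: leq_trans (size_scale_leq _ _) sp.
Qed.

Lemma deg_le_coefM p q n k l l' :
  deg_le_coef p n l -> deg_le_coef q k l' -> deg_le_coef (p * q) (n + k) (l * l').
Proof.
move=> [sp cp] [sq cq]; split.
  by apply: leq_trans (size_polyMleq _ _) _; move: sp sq; rewrite -!subn1; lia.
rewrite coefM (bigD1 (@Ordinal (n + k).+1 n (leq_addr k n))) //= addKn cp cq.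
rewrite big1 ?addr0 // => j /eqP/val_eqP /= jn.
case: (ltngtP j n) jn => // [jn|nj] _; last by rewrite nth_default ?mul0r // (leq_trans sp).
rewrite [q`_ _]nth_default ?mulr0 //; apply: leq_trans sq _.
by have := ltn_ord j; lia.
Qed.

Lemma deg_le_coefS p n l : deg_le_coef p n l -> deg_le_coef p n.+1 0.
Proof. by move=> [sp _]; split; [apply: leq_trans sp _ | rewrite nth_default]. Qed.

Lemma deg_le_coef_size p n : deg_le_coef p n.+1 0 -> (size p <= n.+1)%N.
Proof.
move=> [sp cp]; apply/leq_sizeP => j; rewrite leq_eqVlt => /orP[/eqP <- //|nj].
by rewrite nth_default // (leq_trans sp).
Qed.

Lemma deg_le_coef_lin a k : deg_le_coef (a *: 'X + k%:P) 1 a.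
Proof.
rewrite -mul_polyC; split; last by rewrite coefD coefMX coefC /= coefC addr0.
by rewrite size_MXaddC; case: ifP => // _; rewrite ltnS size_polyC leq_b1.
Qed.

Lemma deg_le_coef_ZXsubC a k : deg_le_coef (a *: 'X - k%:P) 1 a.
Proof. by have := deg_le_coef_lin a (- k); rewrite polyCN. Qed.

Lemma deg_le_coef_XsubC k : deg_le_coef ('X - k%:P) 1 1.
Proof. by have := deg_le_coef_ZXsubC 1 k; rewrite scale1r. Qed.

Lemma deg_le_coef_X : deg_le_coef 'X 1 1.
Proof. by have := deg_le_coef_XsubC 0; rewrite subr0. Qed.

Lemma deg_le_coef_1subZX a : deg_le_coef (1 - a *: 'X) 1 (- a).
Proof. by have := deg_le_coef_lin (- a) 1; rewrite polyC1 scaleNr addrC. Qed.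

Lemma deg_le_coef_prod (T : finType) (A : {pred T}) (F : T -> {poly R}) (l : T -> R) :
  (forall i, deg_le_coef (F i) 1 (l i)) ->
  deg_le_coef (\prod_(i in A) F i) #|A| (\prod_(i in A) l i).
Proof.
move=> dF; rewrite -!big_enum /= cardE; elim: (enum A) => [|i r IH].
  by rewrite !big_nil; split; rewrite ?size_poly1 // coefC.
by rewrite !big_cons; exact: (deg_le_coefM (dF i) IH).
Qed.

End DegLeCoef.

Arguments deg_le_coef_X {R}.

Lemma big_subsetU1 (R : Type) (idx : R) (op : Monoid.com_law idx) (T : finType)
    (a : T) (S : {set T}) (F : {set T} -> R) :
  a \notin S ->
  \big[op/idx]_(I : {set T} | I \subset a |: S) F I =
  \big[op/idx]_(I : {set T} | I \subset S) op (F I) (F (a |: I)).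
Proof.
move=> aS; have subS (I : {set T}) : (I \subset a |: S) && (a \notin I) = (I \subset S).
  by rewrite -subsetD1 setU1K.
rewrite big_split [LHS](bigID (fun I : {set T} => a \in I)) /= Monoid.mulmC; congr (op _ _).
  by apply: eq_bigl => I; rewrite subS.
rewrite (reindex_onto (fun I => a |: I) (fun I => I :\ a)) => [|I /andP[_ aI]]; last exact: setD1K.
apply: eq_bigl => I; rewrite setU11 andbT subUset sub1set setU11 /= -subS.
congr (_ && _); have [aI|aI] := boolP (a \in I); last by rewrite setU1K ?eqxx.
by apply/negbTE/eqP => /setP/(_ a); rewrite !inE eqxx aI.
Qed.

Lemma setU1D (T : finType) (a : T) (A B : {set T}) :
  a \notin B -> (a |: A) :\: B = a |: (A :\: B).
Proof. by move=> aB; rewrite setDUl (setDidPl (_ : [disjoint [set a] & B])) ?disjoints1. Qed.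

Lemma setU1DU1 (T : finType) (a : T) (A B : {set T}) :
  a \notin A -> (a |: A) :\: (a |: B) = A :\: B.
Proof.
move=> aA; apply/setP => j; rewrite !inE.
by case: (eqVneq j a) => [->|]; rewrite ?(negbTE aA) ?andbF.
Qed.

Section Phi.
Variables (R : fieldType) (T : finType) (t : R) (x : T -> R).
Implicit Types (S I J : {set T}) (a i j : T) (b c z : R).

Definition cross i j := (t * x i - x j) / (x i - x j).

Definition phi_term (S : {set T}) (c b : R) (I : {set T}) :=
  c ^+ #|I| * t ^+ 'C(#|I|, 2) * (\prod_(i in I) \prod_(j in S :\: I) cross i j)
  * \prod_(i in I) (1 - x i) * \prod_(j in S :\: I) (1 - b * x j).

Definition Phi (S : {set T}) (c b : R) :=
  \sum_(I : {set T} | I \subset S) phi_term S c b I.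

Lemma Phi_set0 c b : Phi set0 c b = 1.
Proof.
rewrite /Phi (big_pred1 set0) => [|I]; last by rewrite subset0.
by rewrite /phi_term cards0 setD0 !big_set0 expr0 !mulr1.
Qed.

Lemma phi_term_setU1 a S I c b : a \notin S -> I \subset S ->
  phi_term (a |: S) c b I =
  phi_term S c b I * ((1 - b * x a) * \prod_(i in I) cross i a).
Proof.
move=> aS IS; have aI : a \notin I by apply: contra aS; apply: subsetP.
have aSI : a \notin S :\: I by rewrite inE (negbTE aS) andbF.
rewrite /phi_term setU1D // big_setU1 //=.
under eq_bigr => i _ do rewrite big_setU1 //=.
rewrite big_split /=; ring.
Qed.

Lemma phi_term_setU1_in a S I c b : a \notin S -> I \subset S ->
  phi_term (a |: S) c b (a |: I) =
  phi_term S c b I * (c * t ^+ #|I| * (1 - x a) * \prod_(j in S :\: I) cross a j).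
Proof.
move=> aS IS; have aI : a \notin I by apply: contra aS; apply: subsetP.
rewrite /phi_term setU1DU1 // cardsU1 aI add1n binS bin1 exprD exprS !big_setU1 //=; ring.
Qed.

Lemma Phi_setU1 a S c b : a \notin S ->
  Phi (a |: S) c b = \sum_(I : {set T} | I \subset S) phi_term S c b I *
    ((1 - b * x a) * \prod_(i in I) cross i a
     + c * t ^+ #|I| * (1 - x a) * \prod_(j in S :\: I) cross a j).
Proof.
move=> aS; rewrite /Phi big_subsetU1 //; apply: eq_bigr => I IS.
by rewrite /= phi_term_setU1 // phi_term_setU1_in // -mulrDr.
Qed.

Definition nodal (S : {set T}) : {poly R} := \prod_(j in S) ('X - (x j)%:P).

(* At z = x a, the I-th summand of Phi_setU1 with the denominators
   prod_(j in S) (x a - x j) cleared. *)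
Definition num_term (S : {set T}) (c b : R) (I : {set T}) : {poly R} :=
  (1 - b *: 'X) * \prod_(i in I) ('X - (t * x i)%:P)
    * \prod_(j in S :\: I) ('X - (x j)%:P)
  + (c * t ^+ #|I|) *: ((1 - 'X) * \prod_(i in I) ('X - (x i)%:P)
    * \prod_(j in S :\: I) (t *: 'X - (x j)%:P)).

Definition Phi_num (S : {set T}) (c b : R) : {poly R} :=
  \sum_(I : {set T} | I \subset S) phi_term S c b I *: num_term S c b I.

Lemma horner_nodal S z : (nodal S).[z] = \prod_(j in S) (z - x j).
Proof. by rewrite horner_prod; apply: eq_bigr => j _; rewrite hornerXsubC. Qed.

Lemma horner_num_term S c b I z :
  (num_term S c b I).[z] =
  (1 - b * z) * \prod_(i in I) (z - t * x i) * \prod_(j in S :\: I) (z - x j)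
  + c * t ^+ #|I| * ((1 - z) * \prod_(i in I) (z - x i)
    * \prod_(j in S :\: I) (t * z - x j)).
Proof.
rewrite /num_term !hornerE !horner_prod.
by congr (_ * _ * _ + _ * _ * _); apply: eq_bigr => i _; rewrite !hornerE.
Qed.

Lemma nodal_root S j : j \in S -> (nodal S).[x j] = 0.
Proof. by move=> jS; rewrite horner_nodal (bigD1 j) //= subrr mul0r. Qed.

Lemma deg_le_coef_nodal S : deg_le_coef (nodal S) #|S| 1.
Proof. by have := deg_le_coef_prod S (fun j => deg_le_coef_XsubC (x j)); rewrite big1_eq. Qed.

Lemma deg_le_coef_num_term S c b I : I \subset S ->
  deg_le_coef (num_term S c b I) #|S|.+1 (- (b + c * t ^+ #|S|)).
Proof.
move=> IS; have cS : (#|I| + #|S :\: I|)%N = #|S|.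
  by rewrite -[in RHS](cardsID I S) (setIidPr IS).
have d1 := deg_le_coefM (deg_le_coefM (deg_le_coef_1subZX b)
    (deg_le_coef_prod I (fun i => deg_le_coef_XsubC (t * x i))))
  (deg_le_coef_prod (S :\: I) (fun j => deg_le_coef_XsubC (x j))).
have d2 := deg_le_coefM (deg_le_coefM (deg_le_coef_1subZX 1)
    (deg_le_coef_prod I (fun i => deg_le_coef_XsubC (x i))))
  (deg_le_coef_prod (S :\: I) (fun j => deg_le_coef_ZXsubC t (x j))).
move: (deg_le_coefD d1 (deg_le_coefZ (c * t ^+ #|I|) d2)).
rewrite scale1r -addnA cS !big1_eq prodr_const -cS exprD.
by congr deg_le_coef; ring.
Qed.

Lemma deg_le_coef_Phi_num S c b :
  deg_le_coef (Phi_num S c b) #|S|.+1 (- (b + c * t ^+ #|S|) * Phi S c b).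
Proof.
rewrite /Phi_num /Phi mulr_sumr.
apply: (big_ind2 (fun p l => deg_le_coef p #|S|.+1 l)) => [|p1 l1 p2 l2|I IS].
- exact: deg_le_coef0.
- exact: deg_le_coefD.
- by rewrite mulrC; apply/deg_le_coefZ/deg_le_coef_num_term.
Qed.

Lemma horner_Phi_num0 S c b :
  (Phi_num S c b).[0] = (1 + c) * Phi S (c * t) b * (nodal S).[0].
Proof.
rewrite horner_sum /Phi !mulr_sumr mulr_suml; apply: eq_bigr => I IS.
rewrite hornerZ horner_num_term horner_nodal [\prod_(j in S) _](big_setID I) /= (setIidPr IS).
have -> : \prod_(i in I) (0 - t * x i) = t ^+ #|I| * \prod_(i in I) (0 - x i).
  by rewrite -prodr_const -big_split; apply: eq_bigr => i _ /=; ring.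
have -> : \prod_(j in S :\: I) (t * 0 - x j) = \prod_(j in S :\: I) (0 - x j).
  by apply: eq_bigr => j _; rewrite mulr0.
rewrite /phi_term exprMn; ring.
Qed.

Section Injective.
Hypothesis x_inj : injective x.

Lemma nodal_neq0 S a : a \notin S -> (nodal S).[x a] != 0.
Proof.
move=> aS; rewrite horner_nodal; apply/prodf_neq0 => j jS.
by rewrite subr_eq0 (inj_eq x_inj); apply: contraNneq aS => ->.
Qed.

Lemma prod_cross_l a I : a \notin I ->
  \prod_(i in I) cross i a * \prod_(i in I) (x a - x i) = \prod_(i in I) (x a - t * x i).
Proof.
move=> aI; rewrite -big_split; apply: eq_bigr => i iI /=.
have : x i - x a != 0 by rewrite subr_eq0 (inj_eq x_inj); apply: contraNneq aI => <-.
by move=> nz; rewrite /cross; field.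
Qed.

Lemma prod_cross_r a J : a \notin J ->
  \prod_(j in J) cross a j * \prod_(j in J) (x a - x j) = \prod_(j in J) (t * x a - x j).
Proof.
move=> aJ; rewrite -big_split; apply: eq_bigr => j jJ /=.
have : x a - x j != 0 by rewrite subr_eq0 (inj_eq x_inj); apply: contraNneq aJ => ->.
by move=> nz; rewrite /cross; field.
Qed.

Lemma horner_Phi_num S c b a : a \notin S ->
  (Phi_num S c b).[x a] = Phi (a |: S) c b * (nodal S).[x a].
Proof.
move=> aS; rewrite Phi_setU1 // mulr_suml horner_sum; apply: eq_bigr => I IS.
rewrite hornerZ horner_num_term horner_nodal [\prod_(j in S) _](big_setID I) /= (setIidPr IS).
have aI : a \notin I by apply: contra aS; apply: subsetP.
have aSI : a \notin S :\: I by rewrite inE (negbTE aS) andbF.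
by rewrite -(prod_cross_l aI) -(prod_cross_r aSI); ring.
Qed.

Lemma horner_Phi_num_setU1 S c b k : k \notin S -> (Phi_num (k |: S) c b).[x k] = 0.
Proof.
(* The summands for I and k |: I cancel. *)
move=> kS; rewrite horner_sum big_subsetU1 // big1 // => I IS /=.
have kI : k \notin I by apply: contra kS; apply: subsetP.
have kSI : k \notin S :\: I by rewrite inE (negbTE kS) andbF.
rewrite !hornerZ !horner_num_term phi_term_setU1 // phi_term_setU1_in //.
rewrite setU1D // setU1DU1 // !big_setU1 //= cardsU1 (negbTE kI) add1n.
by rewrite -(prod_cross_l kI) -(prod_cross_r kSI) exprS; ring.
Qed.

Lemma Phi_num_root S c b j : j \in S -> (Phi_num S c b).[x j] = 0.
Proof. by move=> jS; rewrite -(setD1K jS) horner_Phi_num_setU1 // setD11. Qed.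

Lemma Phi_num_eq S c b Q : (forall j, j \in S -> x j != 0) ->
  deg_le_coef Q #|S|.+1 (- (b + c * t ^+ #|S|) * Phi S c b) ->
  Q.[0] = (1 + c) * Phi S (c * t) b * (nodal S).[0] ->
  (forall j, j \in S -> Q.[x j] = 0) ->
  Phi_num S c b = Q.
Proof.
move=> nz dQ Q0 Qx; apply/eqP; rewrite -subr_eq0; apply/eqP.
apply: (@roots_geq_poly_eq0 _ _ (0 :: [seq x j | j <- enum S])).
- rewrite /= rootE !hornerE horner_Phi_num0 Q0 subrr eqxx /=.
  apply/allP => z /mapP[j]; rewrite mem_enum => jS ->.
  by rewrite rootE !hornerE Phi_num_root // Qx // subrr.
- rewrite /= map_inj_uniq ?enum_uniq // andbT.
  by apply/mapP => -[j]; rewrite mem_enum => /nz /eqP nzj /esym.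
- rewrite /= size_map -cardE; apply: deg_le_coef_size.
  by have := deg_le_coefB (deg_le_coef_Phi_num S c b) dQ; rewrite subrr.
Qed.

Lemma nonzero_rest_ind (P : {set T} -> Prop) :
  P set0 ->
  (forall a S, a \notin S -> (forall j, j \in S -> x j != 0) -> P S -> P (a |: S)) ->
  forall S, P S.
Proof.
move=> P0 PU1 S; move Hn : #|S| => n; elim: n S Hn => [|n IH] S cS.
  by move/eqP: cS; rewrite cards_eq0 => /eqP ->.
have [a aS nz] : exists2 a, a \in S & forall j, j \in S :\ a -> x j != 0.
  have [a /andP[aS /eqP xa0]|nz] := pickP [pred a | (a \in S) && (x a == 0)].
    exists a => // j /setD1P[ja _]; apply: contraNneq ja => xj0.
    by apply/eqP/x_inj; rewrite xj0 xa0.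
  have /set0Pn[a aS] : S != set0 by rewrite -card_gt0 cS.
  by exists a => // j /setD1P[_ jS]; have /= := nz j; rewrite jS => /negbT.
rewrite -(setD1K aS); apply: PU1 => //; first by rewrite setD11.
by apply: IH; move: cS; rewrite (cardsD1 a) aS => -[].
Qed.

Lemma Phi_geometric S s b : ((0 < #|S|)%N -> b = s * t ^+ #|S|.-1) ->
  Phi S (- s) b = \prod_(i < #|S|) (1 - s * t ^+ i).
Proof.
elim/nonzero_rest_ind: S s => [s _|a S aS nz IH s]; first by rewrite Phi_set0 cards0 big_ord0.
rewrite cardsU1 aS add1n => /(_ isT) /= hb.
set P := \prod_(i < #|S|.+1) (1 - s * t ^+ i).
have PQ : Phi_num S (- s) b = P *: nodal S.
  apply: Phi_num_eq => // [||j jS].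
  - by rewrite hb (mulNr s) subrr oppr0 mul0r; apply/deg_le_coefS/deg_le_coefZ/deg_le_coef_nodal.
  - rewrite hornerZ mulNr IH => [|S_gt0]; last by rewrite hb -mulrA -exprS prednK.
    rewrite /P big_ord_recl expr0 mulr1; congr (_ * _ * _).
    by apply: eq_bigr => i _; rewrite lift0 exprS mulrA.
  - by rewrite hornerZ nodal_root // mulr0.
by apply: (mulIf (nodal_neq0 aS)); rewrite -horner_Phi_num // PQ hornerZ.
Qed.

Lemma Phi_prod S b :
  Phi S (-1) b = (\prod_(i in S) x i) * \prod_(i < #|S|) (t ^+ i - b).
Proof.
elim/nonzero_rest_ind: S => [|a S aS nz IH].
  by rewrite Phi_set0 big_set0 cards0 big_ord0 mulr1.
set K := (\prod_(i in S) x i) * \prod_(i < #|S|.+1) (t ^+ i - b).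
have PQ : Phi_num S (-1) b = K *: ('X * nodal S).
  apply: Phi_num_eq => // [||j jS].
  - have -> : - (b + -1 * t ^+ #|S|) * Phi S (-1) b = K * (1 * 1).
      by rewrite IH /K big_ord_recr /=; ring.
    exact: deg_le_coefZ (deg_le_coefM deg_le_coef_X (deg_le_coef_nodal S)).
  - by rewrite hornerZ hornerM hornerX mul0r mulr0 subrr !mul0r.
  - by rewrite hornerZ hornerM nodal_root // !mulr0.
apply: (mulIf (nodal_neq0 aS)); rewrite -horner_Phi_num // PQ hornerZ hornerM hornerX.
by rewrite big_setU1 //= cardsU1 aS add1n /K; ring.
Qed.

End Injective.

End Phi.

Lemma prod_geometric_ratio (R : fieldType) (t z : R) k :
  (forall j, (0 < j <= k)%N -> 1 - z * t ^+ j != 0) ->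
  \prod_(j < k) ((1 - z * t ^+ j) / (1 - z * t ^+ j.+1)) * (1 - z * t ^+ k) = 1 - z.
Proof.
elim: k => [|k IH] nz; first by rewrite big_ord0 expr0 mulr1 mul1r.
rewrite big_ord_recr /= -mulrA divfK ?nz ?leqnn // IH // => j /andP[j0 jk].
by rewrite nz // j0 (leq_trans jk) ?leqnSn.
Qed.

Lemma prod_expr_subr_bin2 (R : comNzRingType) (t : R) m n : (m <= n)%N ->
  \prod_(i < m) (t ^+ i - t ^+ n) =
  t ^+ 'C(m, 2) * \prod_(i < m) (1 - t ^+ (i.+1 + n - m)).
Proof.
move=> mn; rewrite -bin2_sum big_mkord -prodrXr.
rewrite [X in _ * X](reindex_inj rev_ord_inj) -big_split; apply: eq_bigr => i _ /=.
rewrite mulrBr mulr1 -exprD; congr (_ - _ ^+ _).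
by have := ltn_ord i; lia.
Qed.

Lemma Ffun_geometric (R : fieldType) m n (x : 'I_m -> R) (t u : R) :
  (forall (i : 'I_m) (j : 'I_n), 1 - t * x i * t ^+ j != 0) ->
  Ffun u x (fun j : 'I_n => t ^+ j) t * \prod_(i < m) (1 - t ^+ n * x i) =
  Phi t x [set: 'I_m] (- u) (t ^+ n).
Proof.
move=> nz; have shift i j : t * x i * t ^+ j = x i * t ^+ j.+1.
  by rewrite mulrAC -exprS mulrC.
have ratio i : \prod_(j < n) ((1 - x i * t ^+ j) / (1 - t * x i * t ^+ j))
    * (1 - t ^+ n * x i) = 1 - x i.
  under eq_bigr do rewrite shift; rewrite [t ^+ n * _]mulrC.
  apply: prod_geometric_ratio => -[//|j] /= jn.
  by rewrite -shift (nz i (Ordinal jn)).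
rewrite /Ffun /Phi mulr_suml [RHS](eq_bigl predT) => [|I]; last exact: subsetT.
apply: eq_bigr => I _; rewrite /phi_term setTD [\prod_(i < m) _](bigID (mem I)) /=.
have -> : \prod_(i < m | i \notin I) (1 - t ^+ n * x i) = \prod_(j in ~: I) (1 - t ^+ n * x j).
  by apply: eq_bigl => j; rewrite inE.
rewrite -[\prod_(i in I) (1 - x i)](eq_bigr _ (fun i _ => ratio i)) big_split /=.
by rewrite /cross; ring.
Qed.

Theorem corollary3p3 (R : fieldType) (m n : nat) (x : 'I_m -> R) (t : R) :
  (m <= n)%N ->
  injective x ->
  (forall (i : 'I_m) (j : 'I_n), 1 - t * x i * t ^+ j != 0) ->
  let y := fun j : 'I_n => t ^+ j in
  let P := \prod_(i < m) ((1 - t ^+ (i.+1 + n - m)) / (1 - t ^+ n * x i)) in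
  Ffun (t ^+ (n - m).+1) x y t = P /\
  Ffun 1 x y t = t ^+ 'C(m, 2) * (\prod_(i < m) x i) * P.
Proof.
move=> mn x_inj nz y P.
have den_nz (i : 'I_m) : 1 - t ^+ n * x i != 0.
  have n_gt0 : (0 < n)%N by have := ltn_ord i; lia.
  have n1_lt : (n.-1 < n)%N by rewrite ltn_predL.
  by have := nz i (Ordinal n1_lt); rewrite mulrAC -exprS prednK.
have Q_nz : \prod_(i < m) (1 - t ^+ n * x i) != 0 by apply/prodf_neq0 => i _.
have PQ : P * \prod_(i < m) (1 - t ^+ n * x i) = \prod_(i < m) (1 - t ^+ (i.+1 + n - m)).
  by rewrite /P -big_split; apply: eq_bigr => i _; rewrite /= divfK.
split; apply: (mulIf Q_nz); rewrite Ffun_geometric //.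
  rewrite Phi_geometric // cardsT card_ord => [|m_gt0]; last by rewrite -exprD; congr (_ ^+ _); lia.
  rewrite PQ; apply: eq_bigr => i _; rewrite -exprD; congr (_ - _ ^+ _).
  by have := ltn_ord i; lia.
rewrite Phi_prod // cardsT card_ord prod_expr_subr_bin2 // -!mulrA PQ.
by rewrite (eq_bigl _ _ (in_setT (T := 'I_m))); ring.
Qed.
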